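(* Let $k$ be a positive integer and let $G$ be a finite graph. If $G$ has a $k$-prime product distance labeling, then $G$ is $2^{k+1}$-colorable.
   Context: A $k$-prime product distance labeling of a graph $G$ is an injective map $L:V(G)\to\mathbb{Z}$ such that $|L(u)-L(v)|>1$ for all distinct vertices $u,v$ of $G$, and such that for every pair of adjacent vertices $u,v$ the integer $|L(u)-L(v)|$ has at most $k$ prime factors counted with multiplicity. A graph is $m$-colorable if its vertices can be colored with $m$ colors so that adjacent vertices receive different colors. *)

From mathcomp Require Import all_boot all_order all_algebra.
Set Implicit Arguments. Unset Strict Implicit. Unset Printing Implicit Defensive.
Import Order.TTheory GRing.Theory Num.Theory.

Definition simple_graph (T : finType) (e : rel T) : Prop :=
  symmetric e /\ irreflexive e.

Definition bigOmega (n : nat) : nat := \sum_(p <- primes n) logn p n.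

Definition kPPD_labeling (k : nat) (T : finType) (e : rel T) (L : T -> int) : Prop :=
  injective L /\
  (forall u v : T, u != v -> (1 < `|L u - L v|)%N) /\
  (forall u v : T, e u v -> (bigOmega `|L u - L v| <= k)%N).

Definition colorable (m : nat) (T : finType) (e : rel T) : Prop :=
  exists c : T -> 'I_m, forall u v : T, e u v -> c u != c v.

From mathcomp Require Import all_boot all_order all_algebra.
Import Order.TTheory GRing.Theory Num.Theory.
Set Implicit Arguments. Unset Strict Implicit. Unset Printing Implicit Defensive.
Local Open Scope ring_scope.

(* Colour each vertex by its label modulo 2^(k+1). Two adjacent vertices of
   the same colour would have a nonzero label difference divisible by
   2^(k+1), hence with at least k+1 prime factors, contradicting the
   labeling condition. *)

Lemma logn_le_bigOmega p n : prime p -> (logn p n <= bigOmega n)%N.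
Proof.
move=> p_pr; have [p_n | p_n] := boolP (p \in primes n).
  by rewrite /bigOmega (big_rem p p_n) leq_addr.
by rewrite -logn_gt0 lt0n negbK in p_n; rewrite (eqP p_n).
Qed.

Lemma bigOmega_ge_pfactor p k n :
  prime p -> (0 < n)%N -> (p ^ k %| n)%N -> (k <= bigOmega n)%N.
Proof.
move=> p_pr n_gt0; rewrite pfactor_dvdn // => k_le_logn.
exact: leq_trans k_le_logn (logn_le_bigOmega n p_pr).
Qed.

Lemma absz_modz_lt (x : int) (m : nat) : (0 < m)%N -> (`|(x %% m)%Z| < m)%N.
Proof.
move=> m_gt0; have m_neq0 : m%:Z != 0 by rewrite eqz_nat -lt0n.
by rewrite -ltz_nat gez0_abs ?modz_ge0 // ltz_pmod.
Qed.

Lemma colorable_mod (m : nat) (T : finType) (e : rel T) (L : T -> int) :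
  (0 < m)%N -> (forall u v, e u v -> ~~ (m %| L u - L v)%Z) -> colorable m e.
Proof.
move=> m_gt0 hL; exists (fun u => Ordinal (absz_modz_lt (L u) m_gt0)).
move=> u v /hL; apply: contra => /eqP [] same_mod.
have m_neq0 : m%:Z != 0 by rewrite eqz_nat -lt0n.
rewrite -eqz_mod_dvd -(gez0_abs (modz_ge0 (L u) m_neq0)).
by rewrite -(gez0_abs (modz_ge0 (L v) m_neq0)) same_mod.
Qed.

Theorem mainTheorem1 (k : nat) (T : finType) (e : rel T) :
  (0 < k)%N -> simple_graph e ->
  (exists L : T -> int, kPPD_labeling k e L) ->
  colorable (2 ^ k.+1) e.
Proof.
move=> _ [_ e_irr] [L [L_inj [_ L_omega]]].
apply: (colorable_mod (L := L)); first by rewrite expn_gt0.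
move=> u v e_uv; apply/negP => dvd_diff.
have u_neq_v : u != v by apply: contraTneq e_uv => ->; rewrite e_irr.
have diff_gt0 : (0 < `|L u - L v|)%N.
  by rewrite absz_gt0 subr_eq0 (inj_eq L_inj).
have := bigOmega_ge_pfactor (isT : prime 2) diff_gt0 dvd_diff.
by rewrite ltnNge L_omega.
Qed.
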